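(* Let $\gamma>0$, $n\ge1$, and for each $k\in\{1,\dots,n\}$ let $\hat\gamma(k)$ be an estimator of $\gamma$ satisfying the bias–variance condition (described in the context) with functions $V$ and $B$. Fix $\delta\in(0,1)$ and a nonempty grid $\mathcal K\subset\{1,\dots,n\}$ such that $(\delta,n,\mathcal K)$ is a sufficiently wide grid. Define $E(k)=\gamma V(k,\delta)+B(k,n,\delta)$. Then for all integers $k$ with $1\le k\le k^*(\delta,n)$, $$E(k)\le \min_{1\le j\le n}E(j)+\gamma V(k,\delta).$$
   Context: Bias–variance condition: there exist functions $V:\mathbb N\times(0,1)\to\mathbb R_+$ and $B:\mathbb N\times\mathbb N\times(0,1)\to\mathbb R_+$ such that for every $\delta\in(0,1)$ and every $k\in\{1,\dots,n\}$, with probability at least $1-\delta$, $|\hat\gamma(k)-\gamma|\le \gamma V(k,\delta)+B(k,n,\delta)$; moreover (a) for each $\delta$, $k\mapsto V(k,\delta)$ is non-increasing and $V(k,\delta)\to 0$ as $k\to\infty$; (b) $B$ is non-negative, $k\mapsto B(k,n,\delta)$ is non-decreasing, and $B(k,n,\delta)\to0$ as $k/n\to 0$. Sufficiently wide grid: with $k_{\min}=\min\mathcal K$, $k_{\max}=\max\mathcal K$, $B(k_{\min},n,\delta)\le\gamma V(k_{\min},\delta)$ and $B(k_{\max},n,\delta)>\gamma V(k_{\max},\delta)$. Oracle: $k^*(\delta,n)=\max\{k\in\mathcal K: B(k,n,\delta)\le \gamma V(k,\delta)\}$. *)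

From HB Require Import structures.
From mathcomp Require Import all_boot all_order all_algebra.
From mathcomp Require Import all_classical all_reals all_analysis.
Set Implicit Arguments. Unset Strict Implicit. Unset Printing Implicit Defensive.
Import Order.TTheory GRing.Theory Num.Theory numFieldNormedType.Exports.
Local Open Scope ring_scope.
Local Open Scope classical_set_scope.

Definition bias_variance_condition (R : realType) (d : measure_display)
  (Omega : measurableType d) (P : probability Omega R)
  (gamma : R) (n : nat) (ghat : nat -> Omega -> R)
  (V : nat -> R -> R) (B : nat -> nat -> R -> R) : Prop :=
  (forall k (delta : R), (1 <= k)%N -> 0 < delta < 1 -> 0 <= V k delta) /\
  (forall k m (delta : R), (1 <= k)%N -> (1 <= m)%N -> 0 < delta < 1 -> 0 <= B k m delta) /\
  (forall (delta : R) k, 0 < delta < 1 -> (1 <= k <= n)%N ->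
     ((1 - delta)%:E <=
       P [set w : Omega | (`|ghat k w - gamma| <= gamma * V k delta + B k n delta)%R])%E) /\
  (forall delta : R, 0 < delta < 1 ->
     (forall k k', (1 <= k <= k')%N -> V k' delta <= V k delta) /\
     ((fun k : nat => V k delta) @ \oo --> (0 : R))) /\
  (forall delta : R, 0 < delta < 1 ->
     (forall m k k', (1 <= m)%N -> (1 <= k <= k')%N -> B k m delta <= B k' m delta) /\
     (forall eps : R, 0 < eps -> exists eta : R, 0 < eta /\
        forall k m, (1 <= k <= m)%N -> k%:R / m%:R < eta -> B k m delta < eps)).

Definition kmin (n : nat) (K : seq nat) : nat := \big[minn/n]_(k <- K) k.
Definition kmax (K : seq nat) : nat := \max_(k <- K) k.

Definition sufficiently_wide_grid (R : realType) (gamma : R)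
  (V : nat -> R -> R) (B : nat -> nat -> R -> R)
  (delta : R) (n : nat) (K : seq nat) : Prop :=
  B (kmin n K) n delta <= gamma * V (kmin n K) delta /\
  gamma * V (kmax K) delta < B (kmax K) n delta.

Definition kstar (R : realType) (gamma : R)
  (V : nat -> R -> R) (B : nat -> nat -> R -> R)
  (delta : R) (n : nat) (K : seq nat) : nat :=
  \max_(k <- K | B k n delta <= gamma * V k delta) k.

Definition Err (R : realType) (gamma : R)
  (V : nat -> R -> R) (B : nat -> nat -> R -> R)
  (delta : R) (n : nat) (k : nat) : R :=
  gamma * V k delta + B k n delta.

(* For k <= kstar the bias B(k) is below every E(j): if j <= k
   then B(k) <= B(kstar) <= gamma V(kstar) <= gamma V(j), and if j > k then
   B(k) <= B(j).
   Hence B(k) <= min_j E(j), and adding gamma V(k) to both sides gives the bound. *)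
From HB Require Import structures.
From mathcomp Require Import all_boot all_order all_algebra.
From mathcomp Require Import all_classical all_reals all_analysis.
From mathcomp Require Import lra.
Import Order.TTheory GRing.Theory Num.Theory.
Local Open Scope ring_scope.

Lemma bigmax_seq_attained (I : eqType) (r : seq I) (P : pred I) (F : I -> nat) :
  (0 < \max_(i <- r | P i) F i)%N ->
  exists2 i, (i \in r) && P i & \max_(i <- r | P i) F i = F i.
Proof.
rewrite big_seq_cond.
apply: (big_ind (fun m => (0 < m)%N -> exists2 i, (i \in r) && P i & m = F i)).
- by [].
- by move=> x y IHx IHy; rewrite /maxn; case: (ltnP x y) => _; [exact: IHy | exact: IHx].
- by move=> i riP _; exists i.
Qed.

Section OracleBound.

Variables (R : realType) (v b : nat -> R).
Hypothesis v_noninc : forall k k', (1 <= k <= k')%N -> v k' <= v k.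
Hypothesis b_nondecr : forall k k', (1 <= k <= k')%N -> b k <= b k'.
Hypothesis v_ge0 : forall k, (1 <= k)%N -> 0 <= v k.
Hypothesis b_ge0 : forall k, (1 <= k)%N -> 0 <= b k.

Variables (kappa k : nat).
Hypothesis b_le_v_kappa : b kappa <= v kappa.
Hypothesis k_le_kappa : (1 <= k <= kappa)%N.

Lemma bias_le_err (j : nat) : (1 <= j)%N -> b k <= v j + b j.
Proof.
move=> j_ge1; have /andP[k_ge1 le_k_kappa] := k_le_kappa.
have [le_jk | lt_kj] := leqP j k.
- have b_k_kappa : b k <= b kappa by apply: b_nondecr; rewrite k_ge1.
  have v_kappa_j : v kappa <= v j.
    by apply: v_noninc; rewrite j_ge1 (leq_trans le_jk).
  have := b_le_v_kappa; have := b_ge0 j j_ge1; lra.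
- have b_kj : b k <= b j by apply: b_nondecr; rewrite k_ge1 ltnW.
  have := v_ge0 j j_ge1; lra.
Qed.

Lemma err_le_bigmin_addr (N : nat) :
  v k + b k <= \big[Order.min/v 1%N + b 1%N]_(1 <= j < N) (v j + b j) + v k.
Proof.
suff : b k <= \big[Order.min/v 1%N + b 1%N]_(1 <= j < N) (v j + b j) by lra.
rewrite big_nat_cond.
by apply: le_bigmin => [|j /andP[/andP[j_ge1 _] _]]; exact: bias_le_err.
Qed.

End OracleBound.

Lemma kstar_oracle (R : realType) (gamma : R) (V : nat -> R -> R)
    (B : nat -> nat -> R -> R) (delta : R) (n : nat) (K : seq nat) :
  (0 < kstar gamma V B delta n K)%N ->
  B (kstar gamma V B delta n K) n delta <= gamma * V (kstar gamma V B delta n K) delta.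
Proof. by rewrite /kstar => /bigmax_seq_attained[i /andP[_ Pi] ->]. Qed.

Theorem proposition2 (R : realType) (d : measure_display)
  (Omega : measurableType d) (P : probability Omega R)
  (gamma : R) (n : nat) (ghat : nat -> Omega -> R)
  (V : nat -> R -> R) (B : nat -> nat -> R -> R)
  (delta : R) (K : seq nat) :
  0 < gamma -> (1 <= n)%N ->
  (forall k, (1 <= k <= n)%N -> measurable_fun setT (ghat k)) ->
  bias_variance_condition P gamma n ghat V B ->
  0 < delta < 1 ->
  K != [::] -> all (fun k => 1 <= k <= n)%N K ->
  sufficiently_wide_grid gamma V B delta n K ->
  forall k : nat, (1 <= k <= kstar gamma V B delta n K)%N ->
    Err gamma V B delta n k <=
      \big[Order.min/Err gamma V B delta n 1%N]_(1 <= j < n.+1) Err gamma V B delta n j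
      + gamma * V k delta.
Proof.
move=> gamma_gt0 n_ge1 _ [V_ge0 [B_ge0 [_ [V_mono B_mono]]]] delta01 _ _ _ k k_le_kstar.
have [V_noninc _] := V_mono delta delta01.
have [B_nondecr _] := B_mono delta delta01.
apply: (@err_le_bigmin_addr R (fun j => gamma * V j delta) (fun j => B j n delta)
          _ _ _ _ (kstar gamma V B delta n K)).
- by move=> j j' jj'; apply: ler_wpM2l; [exact: ltW | exact: V_noninc].
- by move=> j j' jj'; exact: B_nondecr.
- by move=> j j_ge1; apply: mulr_ge0; [exact: ltW | exact: V_ge0].
- by move=> j j_ge1; exact: B_ge0.
- by apply: kstar_oracle; case/andP: k_le_kstar; exact: leq_trans.
- exact: k_le_kstar.
Qed.
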